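(* For complex numbers $\alpha_1,\dots,\alpha_r$ and $\theta_i=t_i\frac{\partial}{\partial t_i}$, \[ \Bigl(\prod_{i<j}(\theta_i-\theta_j)\Bigr)e^{\sum_{i=1}^r\alpha_it_i}=e^{\sum_{i=1}^r\alpha_it_i}\prod_{i<j}(\alpha_it_i-\alpha_jt_j). \] *)

From Stdlib Require Import Reals List ClassicalEpsilon.
Import ListNotations.
Open Scope R_scope.

Definition Cx : Type := (R * R)%type.
Definition C0 : Cx := (0, 0).
Definition C1 : Cx := (1, 0).
Definition RtoC (x : R) : Cx := (x, 0).
Definition Cadd (z w : Cx) : Cx := (fst z + fst w, snd z + snd w).
Definition Csub (z w : Cx) : Cx := (fst z - fst w, snd z - snd w).
Definition Cmul (z w : Cx) : Cx :=
  (fst z * fst w - snd z * snd w, fst z * snd w + snd z * fst w).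
Definition Cexp (z : Cx) : Cx := (exp (fst z) * cos (snd z), exp (fst z) * sin (snd z)).

(** Points: t = (t_0, t_1, ...) ; only t_0..t_(r-1) matter. *)
Definition point := nat -> R.
Definition fn := point -> Cx.

Definition upd (t : point) (i : nat) (x : R) : point :=
  fun j => if Nat.eqb j i then x else t j.

Definition is_partial (f : fn) (i : nat) (t : point) (l : Cx) : Prop :=
  derivable_pt_lim (fun x => fst (f (upd t i x))) (t i) (fst l) /\
  derivable_pt_lim (fun x => snd (f (upd t i x))) (t i) (snd l).

(** Partial derivative d f / d t_i (a chosen witness; 0 if not differentiable). *)
Definition partial (i : nat) (f : fn) : fn :=
  fun t => epsilon (inhabits C0) (fun l => is_partial f i t l).

Definition theta (i : nat) (f : fn) : fn :=
  fun t => Cmul (RtoC (t i)) (partial i f t).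

Definition pairs (r : nat) : list (nat * nat) :=
  flat_map (fun j => map (fun i => (i, j)) (seq 0 j)) (seq 0 r).

(** The operator prod_{i<j} (theta_i - theta_j) (composition of commuting operators). *)
Definition theta_vdm (r : nat) (f : fn) : fn :=
  fold_right (fun p g => fun t => Csub (theta (fst p) g t) (theta (snd p) g t)) f (pairs r).

Definition expsum (r : nat) (alpha : nat -> Cx) : fn :=
  fun t => Cexp (fold_right Cadd C0 (map (fun i => Cmul (alpha i) (RtoC (t i))) (seq 0 r))).

Definition vdm_alpha (r : nat) (alpha : nat -> Cx) : fn :=
  fun t => fold_right Cmul C1
    (map (fun p => Csub (Cmul (alpha (fst p)) (RtoC (t (fst p))))
                        (Cmul (alpha (snd p)) (RtoC (t (snd p))))) (pairs r)).

(* Write y_j = alpha_j t_j and theta = t d/dt.  For the Touchard polynomials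
   B_0 = 1, B_(k+1) = X (B_k' + B_k) one has theta (B_k(c t) e^(c t)) =
   B_(k+1)(c t) e^(c t); B_k is monic of degree k.  Hence the linear map sending a
   polynomial q in X_1, ..., X_r to the function
      sum_m q_m prod_j B_(m_j)(y_j) e^(y_j)
   turns multiplication by X_i into theta_i.  The operator of the theorem is thus
   the image of the Vandermonde polynomial prod_(i<j) (X_i - X_j) = +-det(X_j^k),
   applied to the image of 1, which is e^(sum_j y_j).  The image of det(X_j^k) is
   det(B_k(y_j)) prod_j e^(y_j), and since the B_k are monic and triangular,
   det(B_k(y_j)) = det(y_j^k) is the Vandermonde determinant of the y_j. *)

From Pilot Require Import Defs.
From Stdlib Require Import Reals List.
From Stdlib Require Import FunctionalExtensionality ClassicalEpsilon.
From HB Require Import structures.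
From mathcomp Require Import all_boot all_algebra fingroup perm.
From mathcomp Require Import Rstruct complex ssrcomplements mpoly.
From mathcomp Require Import ring.
Import GRing.Theory.
Local Open Scope ring_scope.
Local Open Scope complex_scope.
Set Implicit Arguments.
Unset Strict Implicit.
Unset Printing Implicit Defensive.

Local Notation C := R[i].

Lemma derivable_pt_lim_eq (f g : R -> R) x l l' :
  (forall s, f s = g s) -> l = l' -> derivable_pt_lim f x l -> derivable_pt_lim g x l'.
Proof. by move=> /functional_extensionality-> ->. Qed.

Definition is_cderiv (F : R -> C) (x : R) (l : C) :=
  derivable_pt_lim (fun s => complex.Re (F s)) x (complex.Re l) /\
  derivable_pt_lim (fun s => complex.Im (F s)) x (complex.Im l).

Lemma is_cderiv_eq F G x l l' :
  (forall s, F s = G s) -> l = l' -> is_cderiv F x l -> is_cderiv G x l'.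
Proof. by move=> /functional_extensionality-> ->. Qed.

Lemma is_cderiv_unique F x l l' : is_cderiv F x l -> is_cderiv F x l' -> l = l'.
Proof.
case: l l' => [a b] [a' b'] [da db] [da' db'].
by rewrite [a](uniqueness_limite _ _ _ _ da da') [b](uniqueness_limite _ _ _ _ db db').
Qed.

Lemma is_cderiv_cst (c : C) x : is_cderiv (fun _ => c) x 0.
Proof. by split; apply: derivable_pt_lim_const. Qed.

Lemma is_cderiv_real x : is_cderiv (fun s => s%:C) x 1.
Proof. by split; [apply: derivable_pt_lim_id | apply: derivable_pt_lim_const]. Qed.

Lemma is_cderivD F G x l l' :
  is_cderiv F x l -> is_cderiv G x l' -> is_cderiv (fun s => F s + G s) x (l + l').
Proof.
case: l l' => [a b] [a' b'] [da db] [da' db']; split.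
- apply: derivable_pt_lim_eq (derivable_pt_lim_plus _ _ _ _ _ da da') => // s.
  by rewrite /plus_fct; case: (F s) => [? ?]; case: (G s).
- apply: derivable_pt_lim_eq (derivable_pt_lim_plus _ _ _ _ _ db db') => // s.
  by rewrite /plus_fct; case: (F s) => [? ?]; case: (G s).
Qed.

Lemma is_cderivM F G x l l' : is_cderiv F x l -> is_cderiv G x l' ->
  is_cderiv (fun s => F s * G s) x (l * G x + F x * l').
Proof.
case: l l' => [a b] [a' b'] [da db] [da' db'].
have dRe := derivable_pt_lim_minus _ _ _ _ _
  (derivable_pt_lim_mult _ _ _ _ _ da da') (derivable_pt_lim_mult _ _ _ _ _ db db').
have dIm := derivable_pt_lim_plus _ _ _ _ _
  (derivable_pt_lim_mult _ _ _ _ _ da db') (derivable_pt_lim_mult _ _ _ _ _ db da').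
split; [apply: derivable_pt_lim_eq dRe | apply: derivable_pt_lim_eq dIm] => [s||s|];
  rewrite /plus_fct /minus_fct /mult_fct ?RplusE ?RminusE ?RmultE; case: (F _) => [? ?]; case: (G _) => [? ?] /=; ring.
Qed.

Lemma is_cderivMl (c : C) F x l : is_cderiv F x l -> is_cderiv (fun s => c * F s) x (c * l).
Proof.
move=> dF; apply: is_cderiv_eq (is_cderivM (is_cderiv_cst c x) dF) => //.
by rewrite mul0r add0r.
Qed.

Lemma is_cderiv_sum (I : Type) (r : seq I) (F : I -> R -> C) (l : I -> C) x :
  (forall i, is_cderiv (F i) x (l i)) ->
  is_cderiv (fun s => \sum_(i <- r) F i s) x (\sum_(i <- r) l i).
Proof.
move=> dF; elim: r => [|i r IH].
  by apply: is_cderiv_eq (is_cderiv_cst 0 x) => [s|]; rewrite big_nil.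
by apply: is_cderiv_eq (is_cderivD (dF i) IH) => [s|]; rewrite big_cons.
Qed.

Lemma is_cderiv_horner (p : {poly C}) F x l : is_cderiv F x l ->
  is_cderiv (fun s => p.[F s]) x (p^`().[F x] * l).
Proof.
move=> dF; elim/poly_ind: p => [|p c IH].
  by apply: is_cderiv_eq (is_cderiv_cst 0 x) => [s|]; rewrite ?deriv0 horner0 ?mul0r.
apply: is_cderiv_eq (is_cderivD (is_cderivM IH dF) (is_cderiv_cst c x)) => [s|].
  by rewrite hornerMXaddC.
rewrite derivMXaddC hornerD hornerM hornerX addr0; ring.
Qed.

Definition expC (z : C) : C :=
  Complex (exp (complex.Re z) * cos (complex.Im z)) (exp (complex.Re z) * sin (complex.Im z)).

Lemma expC0 : expC 0 = 1.
Proof. by rewrite /expC /= exp_0 cos_0 sin_0 R0E R1E mulr1 mulr0. Qed.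

Lemma expCD z w : expC (z + w) = expC z * expC w.
Proof.
case: z w => [a b] [c d]; rewrite /expC /= exp_plus cos_plus sin_plus.
by congr (_ +i* _); rewrite ?RplusE ?RminusE ?RmultE; ring.
Qed.

Lemma is_cderiv_expC (c : C) x :
  is_cderiv (fun s => expC (c * s%:C)) x (c * expC (c * x%:C)).
Proof.
case: c => a b.
have dlin (k : R) : derivable_pt_lim (fun s => k * s) x k.
  apply: derivable_pt_lim_eq (derivable_pt_lim_scal id k x 1 (derivable_pt_lim_id x)) => //.
  by rewrite RmultE mulr1.
have dexp := derivable_pt_lim_comp _ exp x _ _ (dlin a) (derivable_pt_lim_exp (a * x)).
have dcos := derivable_pt_lim_comp _ cos x _ _ (dlin b) (derivable_pt_lim_cos (b * x)).
have dsin := derivable_pt_lim_comp _ sin x _ _ (dlin b) (derivable_pt_lim_sin (b * x)).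
split; [apply: derivable_pt_lim_eq (derivable_pt_lim_mult _ _ _ _ _ dexp dcos)
       |apply: derivable_pt_lim_eq (derivable_pt_lim_mult _ _ _ _ _ dexp dsin)] => [s||s|];
  rewrite /Ranalysis1.comp /mult_fct /= !mulr0 subr0 add0r ?RplusE ?RmultE ?RoppE; ring.
Qed.

Definition touchard (k : nat) : {poly C} := iter k (fun p => 'X * (p^`() + p)) 1.

Lemma touchardS k : touchard k.+1 = 'X * ((touchard k)^`() + touchard k).
Proof. by []. Qed.

Lemma coef_touchard_gt k l : (k < l)%N -> (touchard k)`_l = 0.
Proof.
elim: k l => [|k IH] [|l] // lt_kl; first by rewrite /touchard /= coefC.
by rewrite touchardS coefXM /= coefD coef_deriv !IH ?mul0rn ?addr0 // ltnW.
Qed.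

Lemma coef_touchard_deg k : (touchard k)`_k = 1.
Proof.
elim: k => [|k IH]; first by rewrite /touchard /= coefC.
by rewrite touchardS coefXM /= coefD coef_deriv IH coef_touchard_gt // mul0rn add0r.
Qed.

Definition touchard_exp (c : C) (k : nat) (s : R) : C :=
  (touchard k).[c * s%:C] * expC (c * s%:C).

Definition touchard_exp_deriv (c : C) (k : nat) (s : R) : C :=
  c * ((touchard k)^`() + touchard k).[c * s%:C] * expC (c * s%:C).

Lemma is_cderiv_touchard_exp c k x :
  is_cderiv (touchard_exp c k) x (touchard_exp_deriv c k x).
Proof.
have dlin : is_cderiv (fun s => c * s%:C) x (c * 1) by apply/is_cderivMl/is_cderiv_real.
apply: is_cderiv_eq (is_cderivM (is_cderiv_horner (touchard k) dlin) (is_cderiv_expC c x)) => //.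
rewrite /touchard_exp_deriv hornerD; ring.
Qed.

Lemma touchard_exp_derivE c k x :
  x%:C * touchard_exp_deriv c k x = touchard_exp c k.+1 x.
Proof. by rewrite /touchard_exp /touchard_exp_deriv touchardS hornerM hornerX; ring. Qed.

Section LinearExtension.
Variables (n : nat) (S : comNzRingType).
Implicit Types (H : 'X_{1..n} -> S) (p : {mpoly S[n]}).

Definition mlinext H p : S := \sum_(m <- msupp p) p@_m * H m.

Lemma mlinextE H p k : (msize p <= k)%N ->
  mlinext H p = \sum_(m : 'X_{1..n < k}) p@_m * H m.
Proof.
move=> le_pk; rewrite /mlinext (big_mksub 'X_{1..n < k}) ?msupp_uniq //=; last first.
  by move=> m /msize_mdeg_lt /leq_trans; apply.
by rewrite big_rmcond //= => m /memN_msupp_eq0->; rewrite mul0r.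
Qed.

Lemma mlinext_is_zmod_morphism H : zmod_morphism (mlinext H).
Proof.
move=> p q; pose k := maxn (msize p) (msize q).
have le_pk : (msize p <= k)%N by apply: leq_maxl.
have le_qk : (msize q <= k)%N by apply: leq_maxr.
have le_pqk : (msize (p - q) <= k)%N.
  by apply: leq_trans (msizeD_le _ _) _; rewrite msizeN geq_max le_pk le_qk.
rewrite !(mlinextE H le_pk, mlinextE H le_qk, mlinextE H le_pqk) -sumrB.
by apply: eq_bigr => m _; rewrite mcoeffB mulrBl.
Qed.

HB.instance Definition _ H :=
  GRing.isZmodMorphism.Build {mpoly S[n]} S (mlinext H) (mlinext_is_zmod_morphism H).

Lemma mlinextX H m : mlinext H 'X_[m] = H m.
Proof. by rewrite /mlinext msuppX big_seq1 mcoeffX eqxx mul1r. Qed.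

Lemma mlinextZ H c p : mlinext H (c *: p) = c * mlinext H p.
Proof.
rewrite !(mlinextE H (msizeZ_le p c), mlinextE H (leqnn _)) mulr_sumr.
by apply: eq_bigr => m _; rewrite mcoeffZ mulrA.
Qed.

Lemma mlinext_mulX H (i : 'I_n) p :
  mlinext H ('X_i * p) = mlinext (fun m => H (m + U_(i))%MM) p.
Proof.
rewrite {1}(mpolyE p) mulr_sumr raddf_sum /=; apply: eq_bigr => m _.
by rewrite -scalerAr -mpolyXD mlinextZ mlinextX addmC.
Qed.

End LinearExtension.

Lemma mlinext_det_Vandermonde (n : nat) (S : comNzRingType) (f : 'I_n -> nat -> S) :
  mlinext (fun m => \prod_(j < n) f j (m j)) (\det (Vandermonde n (\row_(j < n) 'X_j))) =
  \det (\matrix_(k < n, j < n) f j k).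
Proof.
rewrite /determinant raddf_sum /=; apply: eq_bigr => s _; rewrite raddfMsign /=.
pose m := [multinom nat_of_ord ((s^-1)%g j) | j < n].
have -> : \prod_i Vandermonde n (\row_(j < n) 'X_j) i (s i) = 'X_[m] :> {mpoly S[n]}.
  by rewrite (mpolyXE _ s); apply: eq_bigr => i _; rewrite !mxE mnmE permK.
rewrite mlinextX (reindex_inj (@perm_inj _ s)); congr (_ * _).
by apply: eq_bigr => i _; rewrite mxE mnmE permK.
Qed.

Lemma det_horner_monic_triangular (n : nat) (S : comNzRingType) (P : nat -> {poly S})
    (y : 'rV[S]_n) :
  (forall k l, (k < l)%N -> (P k)`_l = 0) -> (forall k, (P k)`_k = 1) ->
  \det (\matrix_(k < n, j < n) (P k).[y 0 j]) = \det (Vandermonde n y).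
Proof.
move=> P_gt P_deg; set U : 'M[S]_n := \matrix_(k, l) (P k)`_l.
have -> : \matrix_(k < n, j < n) (P k).[y 0 j] = U *m Vandermonde n y.
  apply/matrixP => k j; rewrite !mxE (@horner_coef_wide _ n); last first.
    by apply/leq_sizeP => l /(leq_trans (ltn_ord k)); apply: P_gt.
  by apply: eq_bigr => l _; rewrite !mxE.
rewrite det_mulmx det_trig; last by apply/is_trig_mxP => k l lt_kl; rewrite mxE P_gt.
by rewrite big1 ?mul1r // => k _; rewrite mxE P_deg.
Qed.

Lemma List_seqE a b : List.seq a b = iota a b.
Proof. by elim: b a => [|b IH] a //=; rewrite IH. Qed.

Lemma pairs_bound r p : List.In p (pairs r) -> (p.1 < r)%N /\ (p.2 < r)%N.
Proof.
rewrite /pairs in_flat_map => -[j [/in_seq [_ /ssrnat.ltP lt_jr]]].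
by move=> /in_map_iff [i [<- /in_seq [_ /ssrnat.ltP lt_ij]]]; split => //; apply: ltn_trans lt_jr.
Qed.

Lemma pairsS r : pairs r.+1 = pairs r ++ List.map (fun i => (i, r)) (List.seq 0 r).
Proof. by rewrite /pairs List.seq_S flat_map_app /= app_nil_r. Qed.

Lemma prod_pairs (S : comNzRingType) (F : nat -> nat -> S) r :
  \prod_(p <- pairs r) F p.1 p.2 = \prod_(j < r) \prod_(i < r | (i < j)%N) F i j.
Proof.
elim: r => [|r IH]; first by rewrite big_nil big_ord0.
rewrite pairsS big_cat IH big_map List_seqE.
have -> : iota 0 r = index_iota 0 r by rewrite /index_iota subn0.
rewrite big_mkord [RHS]big_ord_recr /=; congr (_ * _); last first.
  rewrite [RHS]big_mkcond big_ord_recr /= ltnn mulr1 -big_mkcond.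
  by apply: eq_bigl => i; rewrite ltn_ord.
apply: eq_bigr => j _.
by rewrite [RHS]big_mkcond big_ord_recr /= ltnNge (ltnW (ltn_ord j)) mulr1 -big_mkcond.
Qed.

Lemma prod_pairs_Vandermonde (S : comNzRingType) (z : nat -> S) r :
  \prod_(p <- pairs r) (z p.1 - z p.2) =
  (-1) ^+ size (pairs r) * \det (Vandermonde r (\row_(j < r) z j)).
Proof.
have flip ps : \prod_(p <- ps) (z p.1 - z p.2) =
    (-1) ^+ size ps * \prod_(p <- ps) (z p.2 - z p.1).
  elim: ps => [|p ps IH]; first by rewrite !big_nil mulr1.
  by rewrite !big_cons IH exprS /=; ring.
rewrite flip (prod_pairs (fun i j => z j - z i)) det_Vandermonde; congr (_ * _).
rewrite (exchange_big_dep xpredT) //=.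
by apply: eq_bigr => j _; apply: eq_bigr => i _; rewrite !mxE.
Qed.

Definition cx (z : Cx) : C := Complex z.1 z.2.
Definition uncx (z : C) : Cx := (complex.Re z, complex.Im z).

Lemma cxK : cancel cx uncx. Proof. by case. Qed.
Lemma uncxK : cancel uncx cx. Proof. by case. Qed.
Lemma cx_inj : injective cx. Proof. exact: can_inj cxK. Qed.

Lemma cx_add z w : cx (Cadd z w) = cx z + cx w. Proof. by case: z w => [? ?] [? ?]. Qed.
Lemma cx_sub z w : cx (Csub z w) = cx z - cx w. Proof. by case: z w => [? ?] [? ?]. Qed.
Lemma cx_mul z w : cx (Cmul z w) = cx z * cx w. Proof. by case: z w => [? ?] [? ?]. Qed.
Lemma cx_Cexp z : cx (Cexp z) = expC (cx z). Proof. by case: z. Qed.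

Lemma cx_fold_add (A : Type) (g : A -> Cx) (l : list A) :
  cx (fold_right Cadd C0 (List.map g l)) = \sum_(a <- l) cx (g a).
Proof. by elim: l => [|a l IH] /=; rewrite ?big_nil ?big_cons -?IH ?cx_add. Qed.

Lemma cx_fold_mul (A : Type) (g : A -> Cx) (l : list A) :
  cx (fold_right Cmul Defs.C1 (List.map g l)) = \prod_(a <- l) cx (g a).
Proof. by elim: l => [|a l IH] /=; rewrite ?big_nil ?big_cons -?IH ?cx_mul. Qed.

Lemma upd_eq (t : point) i x : upd t i x i = x.
Proof. by rewrite /upd Nat.eqb_refl. Qed.

Lemma upd_neq (t : point) i j x : j != i -> upd t i x j = t j.
Proof. by move=> /eqP neq_ji; rewrite /upd (proj2 (Nat.eqb_neq j i) neq_ji). Qed.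

Lemma theta_cderiv (F : point -> C) i t l :
  is_cderiv (fun x => F (upd t i x)) (t i) l ->
  theta i (fun t => uncx (F t)) t = uncx ((t i)%:C * l).
Proof.
move=> dF; rewrite /theta /partial; set l' := epsilon _ _.
have [dRe dIm] : is_partial (fun t => uncx (F t)) i t l'.
  by apply: epsilon_spec; exists (uncx l); case: dF.
have dF' : is_cderiv (fun x => F (upd t i x)) (t i) (cx l') by split.
by apply: cx_inj; rewrite cx_mul uncxK (is_cderiv_unique dF' dF).
Qed.

Lemma expC_sum (I : Type) (l : seq I) (F : I -> C) :
  expC (\sum_(i <- l) F i) = \prod_(i <- l) expC (F i).
Proof. exact: (big_morph expC expCD expC0). Qed.

Section ThetaCalculus.
Variables (r : nat) (alpha : nat -> Cx).

Local Notation a j := (cx (alpha j)).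

Definition touchard_mono (t : point) (m : 'X_{1..r}) : C :=
  \prod_(j < r) touchard_exp (a j) (m j) (t j).

Definition touchard_fn (q : {mpoly C[r]}) : fn := fun t => uncx (mlinext (touchard_mono t) q).

Lemma touchard_mono_upd t m (i : 'I_r) x : touchard_mono (upd t i x) m =
  touchard_exp (a i) (m i) x * \prod_(j < r | j != i) touchard_exp (a j) (m j) (t j).
Proof.
rewrite /touchard_mono (bigD1 i) //= upd_eq; congr (_ * _).
by apply: eq_bigr => j neq_ji; rewrite upd_neq.
Qed.

Lemma touchard_mono_addU t m (i : 'I_r) : touchard_mono t (m + U_(i))%MM =
  touchard_exp (a i) (m i).+1 (t i) * \prod_(j < r | j != i) touchard_exp (a j) (m j) (t j).
Proof.
rewrite /touchard_mono (bigD1 i) //= mnmDE mnm1E eqxx addn1; congr (_ * _).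
by apply: eq_bigr => j neq_ji; rewrite mnmDE mnm1E eq_sym (negbTE neq_ji) addn0.
Qed.

Lemma theta_touchard_fn (i : 'I_r) q t : theta i (touchard_fn q) t = touchard_fn ('X_i * q) t.
Proof.
pose D m := q@_m * (touchard_exp_deriv (a i) (m i) (t i) *
                    \prod_(j < r | j != i) touchard_exp (a j) (m j) (t j)).
have dq : is_cderiv (fun x => mlinext (touchard_mono (upd t i x)) q) (t i) (\sum_(m <- msupp q) D m).
  apply: is_cderiv_sum => m; apply: is_cderivMl.
  apply: is_cderiv_eq (is_cderivM (is_cderiv_touchard_exp (a i) (m i) (t i)) (is_cderiv_cst _ _)).
    by move=> x; rewrite touchard_mono_upd.
  by rewrite mulr0 addr0.
rewrite (theta_cderiv dq) /touchard_fn mlinext_mulX /mlinext mulr_sumr; congr uncx.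
apply: eq_bigr => m _; rewrite touchard_mono_addU -touchard_exp_derivE /D; ring.
Qed.

(* Junk value [0] for [k >= r]; only used for indices of [pairs r]. *)
Definition natX (k : nat) : {mpoly C[r]} := oapp (fun i : 'I_r => 'X_i) 0 (insub k).

Lemma natX_ord (i : 'I_r) : natX i = 'X_i.
Proof. by rewrite /natX valK. Qed.

Lemma theta_touchard_fn_nat k q : (k < r)%N -> theta k (touchard_fn q) = touchard_fn (natX k * q).
Proof.
move=> lt_kr; apply: functional_extensionality => t.
by rewrite -[k]/(nat_of_ord (Ordinal lt_kr)) theta_touchard_fn natX_ord.
Qed.

Lemma theta_vdm_touchard_fn q :
  theta_vdm r (touchard_fn q) = touchard_fn ((\prod_(p <- pairs r) (natX p.1 - natX p.2)) * q).
Proof.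
rewrite /theta_vdm; elim: (pairs r) (@pairs_bound r) => [|p ps IH] bound /=.
  by rewrite big_nil mul1r.
have [lt_p1 lt_p2] := bound p (or_introl erefl).
rewrite IH => [|p' ps_p']; last by apply: bound; right.
apply: functional_extensionality => t; apply: cx_inj.
by rewrite cx_sub !theta_touchard_fn_nat // !uncxK -raddfB -mulrBl big_cons mulrA.
Qed.

Local Notation y t j := (a j * (t j%N)%:C).

Lemma cx_touchard_fn1 t : cx (touchard_fn 1 t) = \prod_(j < r) expC (y t j).
Proof.
rewrite uncxK -mpolyX0 mlinextX; apply: eq_bigr => j _.
by rewrite mnm0E /touchard_exp /= hornerC mul1r.
Qed.

Lemma expsum_touchard_fn1 : expsum r alpha = touchard_fn 1.
Proof.
apply: functional_extensionality => t; apply: cx_inj.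
rewrite cx_touchard_fn1 /expsum cx_Cexp cx_fold_add expC_sum List_seqE.
have -> : iota 0 r = index_iota 0 r by rewrite /index_iota subn0.
by rewrite big_mkord; apply: eq_bigr => j _; rewrite cx_mul.
Qed.

Lemma cx_vdm_alpha t : cx (vdm_alpha r alpha t) = \prod_(p <- pairs r) (y t p.1 - y t p.2).
Proof. by rewrite cx_fold_mul; apply: eq_bigr => p _; rewrite cx_sub !cx_mul. Qed.

Lemma cx_touchard_fn_vdm t :
  cx (touchard_fn (\prod_(p <- pairs r) (natX p.1 - natX p.2)) t) =
  (\prod_(p <- pairs r) (y t p.1 - y t p.2)) * \prod_(j < r) expC (y t j).
Proof.
rewrite uncxK (prod_pairs_Vandermonde (fun j => y t j)) prod_pairs_Vandermonde.
rewrite raddfMsign /= -mulrA; congr (_ * _).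
have -> : \row_(j < r) natX j = \row_(j < r) 'X_j by apply/rowP => j; rewrite !mxE natX_ord.
rewrite [LHS](mlinext_det_Vandermonde (fun j k => touchard_exp (a j) k (t j))).
have -> : \matrix_(k < r, j < r) touchard_exp (a j) k (t j) =
    \matrix_(k < r, j < r) (touchard k).[(\row_(j < r) y t j) 0 j] *m
    diag_mx (\row_(j < r) expC (y t j)).
  by apply/matrixP => k j; rewrite mul_mx_diag !mxE.
rewrite det_mulmx det_diag det_horner_monic_triangular; last exact: coef_touchard_deg.
  by congr (_ * _); apply: eq_bigr => j _; rewrite mxE.
exact: coef_touchard_gt.
Qed.

End ThetaCalculus.

Theorem mainTheorem14 (r : nat) (alpha : nat -> Cx) (t : point) :
  theta_vdm r (expsum r alpha) t = Cmul (expsum r alpha t) (vdm_alpha r alpha t).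
Proof.
apply: cx_inj.
rewrite expsum_touchard_fn1 theta_vdm_touchard_fn mulr1 cx_mul cx_touchard_fn_vdm cx_touchard_fn1.
by rewrite cx_vdm_alpha mulrC.
Qed.
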